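(* Let $T\ge 3$ and consider the dynamic panel logit AR(1) model: binary outcomes $Y_0,Y_1,\dots,Y_T\in\{0,1\}$, regressors $X=(X_1,\dots,X_T)\in\mathbb{R}^{K\times T}$, fixed effect $A\in\mathbb{R}$, with, for $t\in\{1,\dots,T\}$, $$\Pr(Y_t=1\mid Y_0,\dots,Y_{t-1},X,A)=\frac{\exp(X_t'\beta_0+Y_{t-1}\gamma_0+A)}{1+\exp(X_t'\beta_0+Y_{t-1}\gamma_0+A)}.$$ For $y_0\in\{0,1\}$, $y=(y_1,\dots,y_T)\in\{0,1\}^T$, $x\in\mathbb{R}^{K\times T}$, $\beta\in\mathbb{R}^K$, $\gamma\in\mathbb{R}$ let $z_t=x_t'\beta+y_{t-1}\gamma$ and $z_{ts}=z_t-z_s$. For $t<s<r$ in $\{1,\dots,T\}$ define $$m^{(a)(t,s,r)}_{y_0}(y,x,\beta,\gamma)=\begin{cases}\exp(z_{ts})&(y_t,y_s,y_r)=(0,1,0),\\ \exp(z_{tr})&(y_t,y_s,y_r)=(0,1,1),\\ -1&(y_t,y_s)=(1,0),\\ \exp(z_{rs})-1&(y_t,y_s,y_r)=(1,1,0),\\0&\text{otherwise},\end{cases}$$ $$m^{(b)(t,s,r)}_{y_0}(y,x,\beta,\gamma)=\begin{cases}\exp(z_{sr})-1&(y_t,y_s,y_r)=(0,0,1),\\ -1&(y_t,y_s)=(0,1),\\ \exp(z_{rt})&(y_t,y_s,y_r)=(1,0,0),\\ \exp(z_{st})&(y_t,y_s,y_r)=(1,0,1),\\0&\text{otherwise}.\end{cases}$$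 Then for all $t<s<r$ in $\{1,\dots,T\}$, all $y_0\in\{0,1\}$, $x\in\mathbb{R}^{K\times T}$, $\alpha\in\mathbb{R}$ and all functions $w:\{0,1\}^{t-1}\to\mathbb{R}$, $$\mathbb{E}\big[w(Y_1,\dots,Y_{t-1})\,m^{(a)(t,s,r)}_{y_0}(Y,X,\beta_0,\gamma_0)\mid Y_0=y_0,X=x,A=\alpha\big]=0,$$ $$\mathbb{E}\big[w(Y_1,\dots,Y_{t-1})\,m^{(b)(t,s,r)}_{y_0}(Y,X,\beta_0,\gamma_0)\mid Y_0=y_0,X=x,A=\alpha\big]=0,$$ where $Y=(Y_1,\dots,Y_T)$.
   Context: The joint distribution of $(Y_0,X,A)$ is unrestricted; only the conditional law of $(Y_1,\dots,Y_T)$ given $(Y_0,X,A)$ is specified by the logit model. Note $z_t$ depends on $y_{t-1}$ (with $y_0$ the initial condition). For $t=1$, $w$ is a constant. *)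

From HB Require Import structures.
From mathcomp Require Import all_boot all_order all_algebra.
From mathcomp Require Import reals sequences exp.
Set Implicit Arguments. Unset Strict Implicit. Unset Printing Implicit Defensive.
Import Order.TTheory GRing.Theory Num.Theory.
Local Open Scope ring_scope.

Section DynLogit.
Variables (R : realType) (T K : nat).

(* Periods are numbered 1..T; period t corresponds to the ordinal t-1 of 'I_T.
   y_t for t in 0..T: y_0 is the initial condition, y_t = y (t-1) otherwise. *)
Definition yat (y0 : bool) (y : {ffun 'I_T -> bool}) (t : nat) : bool :=
  if t is t'.+1 then
    (match (insub t' : option 'I_T) with Some i => y i | None => false end)
  else y0.

Definition xbeta (x : 'M[R]_(K, T)) (beta : 'cV[R]_K) (t : nat) : R :=
  match (insub t.-1 : option 'I_T) with Some i => \sum_(k < K) x k i * beta k 0 | None => 0 end.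

Definition zt (y0 : bool) (y : {ffun 'I_T -> bool}) (x : 'M[R]_(K, T))
  (beta : 'cV[R]_K) (gamma : R) (t : nat) : R :=
  xbeta x beta t + (yat y0 y t.-1)%:R * gamma.

Definition Lambda (u : R) : R := expR u / (1 + expR u).

(* Pr(Y_1..Y_T = y | Y_0 = y0, X = x, A = alpha) under the logit AR(1) model
   with parameters (beta, gamma) *)
Definition path_prob (beta : 'cV[R]_K) (gamma : R) (y0 : bool)
  (x : 'M[R]_(K, T)) (alpha : R) (y : {ffun 'I_T -> bool}) : R :=
  \prod_(i < T)
    (let p := Lambda (zt y0 y x beta gamma i.+1 + alpha) in
     if y i then p else 1 - p).

Definition cond_exp (beta : 'cV[R]_K) (gamma : R) (y0 : bool)
  (x : 'M[R]_(K, T)) (alpha : R) (f : {ffun 'I_T -> bool} -> R) : R :=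
  \sum_(y : {ffun 'I_T -> bool}) path_prob beta gamma y0 x alpha y * f y.

Definition m_a (t s r : nat) (y0 : bool) (y : {ffun 'I_T -> bool})
  (x : 'M[R]_(K, T)) (beta : 'cV[R]_K) (gamma : R) : R :=
  let z := zt y0 y x beta gamma in
  match yat y0 y t, yat y0 y s, yat y0 y r with
  | false, true, false => expR (z t - z s)
  | false, true, true => expR (z t - z r)
  | true, false, _ => -1
  | true, true, false => expR (z r - z s) - 1
  | _, _, _ => 0
  end.

Definition m_b (t s r : nat) (y0 : bool) (y : {ffun 'I_T -> bool})
  (x : 'M[R]_(K, T)) (beta : 'cV[R]_K) (gamma : R) : R :=
  let z := zt y0 y x beta gamma in
  match yat y0 y t, yat y0 y s, yat y0 y r with
  | false, false, true => expR (z s - z r) - 1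
  | false, true, _ => -1
  | true, false, false => expR (z r - z t)
  | true, false, true => expR (z s - z t)
  | _, _, _ => 0
  end.

Definition hist (t : nat) (y0 : bool) (y : {ffun 'I_T -> bool}) :
  {ffun 'I_t.-1 -> bool} := [ffun i : 'I_t.-1 => yat y0 y i.+1].

End DynLogit.

From HB Require Import structures.
From mathcomp Require Import all_boot all_order all_algebra.
From mathcomp Require Import reals sequences exp.
From mathcomp Require Import zify ring.
Import Order.TTheory GRing.Theory Num.Theory.
Local Open Scope ring_scope.

(* Conditionally on Y_1, ..., Y_(r-1), the mean of m^(a) (resp. m^(b)) is affine in
   q = P(Y_r = 1 | Y_(r-1)), and q only matters on the event Y_s = 1 (resp. Y_s = 0).
   By the Markov property, integrating out Y_(s+1), ..., Y_(r-1) replaces q by a function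
   of Y_s, hence by a constant on that event. Integrating out Y_s and then Y_t gives 0 for
   every value of this constant, each time by the logistic identity
   Lambda(u) = (1 - Lambda(u)) e^u. The weight w(Y_1, ..., Y_(t-1)) factors out of all
   these conditional expectations. *)

Definition ffun_set {I : finType} {U : Type} (i : I) (u : U) (y : {ffun I -> U}) :
  {ffun I -> U} := [ffun j => if j == i then u else y j].

Lemma sum_ffun_set_pair {I : finType} {V : nmodType} (i : I)
    (H : {ffun I -> bool} -> V) :
  \sum_y (H (ffun_set i true y) + H (ffun_set i false y)) = (\sum_y H y) *+ 2.
Proof.
pose flip (y : {ffun I -> bool}) : {ffun I -> bool} :=
  [ffun j => if j == i then ~~ y j else y j].
have flipK : involutive flip.
  by move=> y; apply/ffunP => j; rewrite !ffunE; case: eqP => // ->; rewrite negbK.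
rewrite mulr2n [X in _ = _ + X](reindex_inj (inv_inj flipK)) -big_split /=.
apply: eq_bigr => y _.
have set_id : ffun_set i (y i) y = y.
  by apply/ffunP => j; rewrite ffunE; case: eqP => // ->.
have set_flip : ffun_set i (~~ y i) y = flip y.
  by apply/ffunP => j; rewrite !ffunE; case: eqP => // ->.
by case: (y i) set_id set_flip => /= -> ->; rewrite // addrC.
Qed.

Section DynLogitMoments.
Variables (R : realType) (T K : nat).
Variables (beta : 'cV[R]_K) (gamma : R) (y0 : bool) (x : 'M[R]_(K, T)) (alpha : R).

Local Notation path := {ffun 'I_T -> bool}.
Local Notation E := (cond_exp beta gamma y0 x alpha).

Definition setp (k : nat) (b : bool) (y : path) : path :=
  [ffun j : 'I_T => if j.+1 == k then b else y j].

Definition agree_upto (k : nat) (y y' : path) := forall j : 'I_T, (j < k)%N -> y j = y' j.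

Definition depends_upto (k : nat) (f : path -> R) :=
  forall y y', agree_upto k y y' -> f y = f y'.

Lemma agree_uptoW {k k' y y'} : (k' <= k)%N -> agree_upto k y y' -> agree_upto k' y y'.
Proof. by move=> hk e j hj; apply: e; lia. Qed.

Lemma depends_uptoW {k k' f} : (k <= k')%N -> depends_upto k f -> depends_upto k' f.
Proof. by move=> hk hf y y' e; apply: hf; apply: agree_uptoW e. Qed.

Lemma depends_uptoM {k g f} : depends_upto k g -> depends_upto k f ->
  depends_upto k (fun y => g y * f y).
Proof. by move=> hg hf y y' e; rewrite (hg y y' e) (hf y y' e). Qed.

Lemma yat_agree {k y y' n} : agree_upto k y y' -> (n <= k)%N -> yat y0 y n = yat y0 y' n.
Proof.
case: n => //= n e hn; case: insubP => [j _ hj|_] //.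
by apply: e; rewrite hj.
Qed.

Lemma zt_agree {k y y' n} : agree_upto k y y' -> (n <= k.+1)%N ->
  zt y0 y x beta gamma n = zt y0 y' x beta gamma n.
Proof. by move=> e hn; rewrite /zt (yat_agree e) //; lia. Qed.

Lemma hist_agree {k y y' t} : agree_upto k y y' -> (t <= k.+1)%N ->
  hist t y0 y = hist t y0 y'.
Proof.
move=> e ht; apply/ffunP => j; rewrite !ffunE (yat_agree e) //.
by have := ltn_ord j; lia.
Qed.

Lemma setp_agree k b y : agree_upto k.-1 (setp k b y) y.
Proof. by move=> j hj; rewrite ffunE; case: eqP => //; lia. Qed.

Lemma agree_upto_setp {k y y'} b :
  agree_upto k.-1 y y' -> agree_upto k (setp k b y) (setp k b y').
Proof. by move=> e j hj; rewrite !ffunE; case: eqP => // /eqP ?; apply: e; lia. Qed.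

Lemma yat_setp k b y : (0 < k <= T)%N -> yat y0 (setp k b y) k = b.
Proof.
case: k => //= k hk; case: insubP => [j _ hj|]; last by rewrite hk.
by rewrite ffunE hj eqxx.
Qed.

Lemma yat_setp_lt k b y n : (n < k)%N -> yat y0 (setp k b y) n = yat y0 y n.
Proof. by move=> hn; apply: (yat_agree (setp_agree k b y)); lia. Qed.

Lemma zt_setp k b y n : (n <= k)%N ->
  zt y0 (setp k b y) x beta gamma n = zt y0 y x beta gamma n.
Proof. by move=> hn; apply: (zt_agree (setp_agree k b y)); lia. Qed.

Definition trans_prob (k : nat) (b : bool) : R :=
  Lambda (xbeta x beta k + b%:R * gamma + alpha).

(* The conditional mean of [f] given Y_1, ..., Y_(k-1), when [f] only depends on
   Y_1, ..., Y_k. *)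
Definition integrate_out (k : nat) (f : path -> R) (y : path) : R :=
  trans_prob k (yat y0 y k.-1) * f (setp k true y) +
  (1 - trans_prob k (yat y0 y k.-1)) * f (setp k false y).

Lemma integrate_out_depends {k f} :
  depends_upto k f -> depends_upto k.-1 (integrate_out k f).
Proof.
move=> hf y y' e; rewrite /integrate_out (yat_agree e) //.
by rewrite !(hf _ _ (agree_upto_setp _ e)).
Qed.

Lemma integrate_out_id k f y : depends_upto k.-1 f -> integrate_out k f y = f y.
Proof. by move=> hf; rewrite /integrate_out !(hf _ y (setp_agree _ _ _)) /=; ring. Qed.

Lemma integrate_out_mull k g f y : depends_upto k.-1 g ->
  integrate_out k (fun y => g y * f y) y = g y * integrate_out k f y.
Proof. by move=> hg; rewrite /integrate_out !(hg _ y (setp_agree _ _ _)) /=; ring. Qed.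

Definition obs_prob (k : nat) (y : path) : R :=
  if yat y0 y k then trans_prob k (yat y0 y k.-1) else 1 - trans_prob k (yat y0 y k.-1).

Definition prefix_prob (k : nat) (y : path) : R := \prod_(i < k) obs_prob i.+1 y.

Lemma prefix_prob_T y : prefix_prob T y = path_prob beta gamma y0 x alpha y.
Proof. by apply: eq_bigr => i _; rewrite /obs_prob /= valK. Qed.

Lemma prefix_prob_agree {k y y'} : agree_upto k y y' -> prefix_prob k y = prefix_prob k y'.
Proof.
move=> e; apply: eq_bigr => i _; have := ltn_ord i => hi.
by rewrite /obs_prob !(yat_agree e) //; lia.
Qed.

Lemma obs_prob_setp k b y : (0 < k <= T)%N ->
  obs_prob k (setp k b y) =
  if b then trans_prob k (yat y0 y k.-1) else 1 - trans_prob k (yat y0 y k.-1).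
Proof. by move=> hk; rewrite /obs_prob yat_setp // yat_setp_lt //; lia. Qed.

Lemma sum_prefix_prob_double k f : (k < T)%N ->
  \sum_y prefix_prob k y * integrate_out k.+1 f y =
  (\sum_y prefix_prob k.+1 y * f y) *+ 2.
Proof.
move=> hk; rewrite -(sum_ffun_set_pair (Ordinal hk)); apply: eq_bigr => y _.
have setpE b : setp k.+1 b y = ffun_set (Ordinal hk) b y.
  by apply/ffunP => j; rewrite !ffunE.
rewrite -!setpE /prefix_prob !big_ord_recr /= -!/(prefix_prob k _).
rewrite !obs_prob_setp ?hk // !(prefix_prob_agree (setp_agree k.+1 _ y)) /integrate_out /=.
ring.
Qed.

(* The factor 2 ^+ n counts the unconstrained outcomes of the periods k+1, ..., T. *)
Lemma sum_prefix_prob n k f : (k + n = T)%N -> depends_upto k f ->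
  \sum_y prefix_prob k y * f y = 2 ^+ n * E f.
Proof.
elim: n k => [|n IH] k hkn hf.
  rewrite expr0 mul1r; move: hkn; rewrite addn0 => ->.
  by apply: eq_bigr => y _; rewrite prefix_prob_T.
have hk : (k < T)%N by lia.
under eq_bigr => y _ do rewrite -(integrate_out_id k.+1 f y hf).
rewrite sum_prefix_prob_double // IH; [|lia|exact: depends_uptoW hf].
by rewrite exprS; ring.
Qed.

Lemma cond_exp_tower k f : (0 < k <= T)%N -> depends_upto k f ->
  E f = E (integrate_out k f).
Proof.
case: k => // k /andP[_ hk] hf.
have h1 := @sum_prefix_prob (T - k.+1) k.+1 f ltac:(lia) hf.
have h2 := @sum_prefix_prob (T - k.+1).+1 k _ ltac:(lia) (integrate_out_depends hf).
have h2n : (2 : R) ^+ (T - k.+1).+1 != 0 by rewrite expf_neq0 // pnatr_eq0.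
apply: (mulfI h2n); rewrite -h2 sum_prefix_prob_double // h1 exprS; ring.
Qed.

Lemma eq_cond_exp f g : (forall y, f y = g y) -> E f = E g.
Proof. by move=> fg; apply: eq_bigr => y _; rewrite fg. Qed.

Lemma cond_exp0 : E (fun=> 0) = 0.
Proof. by apply: big1 => y _; rewrite mulr0. Qed.

Definition affine_param (H : R -> path -> R) :=
  forall p q1 q2 y, H (p * q1 + (1 - p) * q2) y = p * H q1 y + (1 - p) * H q2 y.

Lemma affine_param_mull (g : path -> R) {H} :
  affine_param H -> affine_param (fun q y => g y * H q y).
Proof. by move=> Haff p q1 q2 y; rewrite Haff; ring. Qed.

(* The witness is psi b = E[phi(Y_k) | Y_s = b], built backwards from k to s. *)
Lemma cond_exp_markov {s k} {H : R -> path -> R} (phi : bool -> R) :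
  (s <= k <= T)%N -> (forall q, depends_upto s (H q)) -> affine_param H ->
  exists psi : bool -> R,
    E (fun y => H (phi (yat y0 y k)) y) = E (fun y => H (psi (yat y0 y s)) y).
Proof.
move=> + hH Haff; elim: k phi => [|k IH] phi /andP[hsk hkT].
  by exists phi; move: hsk; rewrite leqn0 => /eqP ->.
have [<-|hsk'] := eqVneq s k.+1; first by exists phi.
pose phi' b := trans_prob k.+1 b * phi true + (1 - trans_prob k.+1 b) * phi false.
have [|psi IHpsi] := IH phi'; first lia.
exists psi; rewrite -IHpsi (cond_exp_tower k.+1); first last.
- move=> y y' e; rewrite (yat_agree e) //.
  by apply: hH; apply: agree_uptoW e; lia.
- by rewrite hkT.
apply: eq_cond_exp => y; rewrite /integrate_out !yat_setp ?hkT //.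
have Hsetp q b : H q (setp k.+1 b y) = H q y.
  by apply: hH; apply: agree_uptoW (setp_agree k.+1 b y); lia.
by rewrite !Hsetp -Haff.
Qed.

Lemma cond_exp_weighted_eq0 {t s r} (W f : path -> R) (Hr Hs : R -> path -> R)
    (b : bool) :
  (0 < t)%N -> (t < s)%N -> (s < r)%N -> (r <= T)%N ->
  depends_upto t.-1 W -> depends_upto r f ->
  (forall q, depends_upto s (Hr q)) -> affine_param Hr ->
  (forall q, depends_upto t (Hs q)) ->
  (forall y, integrate_out r f y = Hr (trans_prob r (yat y0 y r.-1)) y) ->
  (forall psi y, integrate_out s (fun y => Hr (psi (yat y0 y s)) y) y = Hs (psi b) y) ->
  (forall q y, integrate_out t (Hs q) y = 0) ->
  E (fun y => W y * f y) = 0.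
Proof.
move=> t0 ts sr rT W_dep f_dep Hr_dep Hr_aff Hs_dep f_r Hr_s Hs_t.
have [hr hs ht] : [/\ (0 < r <= T)%N, (0 < s <= T)%N & (0 < t <= T)%N] by split; lia.
have W_depW k : (t.-1 <= k)%N -> depends_upto k W by move=> hk; apply: depends_uptoW W_dep.
have WHr_dep q : depends_upto s (fun y => W y * Hr q y).
  by apply: depends_uptoM (Hr_dep q); apply: W_depW; lia.
rewrite (cond_exp_tower r) //; last first.
  by apply: depends_uptoM f_dep; apply: W_depW; lia.
transitivity (E (fun y => W y * Hr (trans_prob r (yat y0 y r.-1)) y)).
  by apply: eq_cond_exp => y; rewrite integrate_out_mull ?f_r //; apply: W_depW; lia.
have s_r : (s <= r.-1 <= T)%N by lia.
have [psi ->] := cond_exp_markov (trans_prob r) s_r WHr_dep (affine_param_mull W Hr_aff).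
rewrite (cond_exp_tower s) //; last first.
  by move=> y y' e; rewrite (yat_agree e) //; apply: WHr_dep.
transitivity (E (fun y => W y * Hs (psi b) y)).
  by apply: eq_cond_exp => y; rewrite integrate_out_mull ?Hr_s //; apply: W_depW; lia.
rewrite (cond_exp_tower t) //; last first.
  by apply: depends_uptoM (Hs_dep _); apply: W_depW; lia.
rewrite -cond_exp0; apply: eq_cond_exp => y.
by rewrite integrate_out_mull ?Hs_t ?mulr0.
Qed.

Definition odds (k : nat) (y : path) : R := expR (zt y0 y x beta gamma k + alpha).

Lemma odds_gt0 k y : 0 < odds k y.
Proof. exact: expR_gt0. Qed.

Lemma odds_agree {k y y' n} : agree_upto k y y' -> (n <= k.+1)%N -> odds n y = odds n y'.
Proof. by move=> e hn; rewrite /odds (zt_agree e). Qed.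

Lemma odds_setp k b y n : (n <= k)%N -> odds n (setp k b y) = odds n y.
Proof. by move=> hn; rewrite /odds zt_setp. Qed.

Lemma trans_probE k y : trans_prob k (yat y0 y k.-1) = odds k y / (1 + odds k y).
Proof. by []. Qed.

Lemma expR_zt_sub k n y :
  expR (zt y0 y x beta gamma k - zt y0 y x beta gamma n) = odds k y / odds n y.
Proof. by rewrite -expRB; congr expR; ring. Qed.

Ltac field_odds := field; rewrite ?andbT !lt0r_neq0 ?addr_gt0 ?odds_gt0.

(* The mean of m^(a) given Y_1, ..., Y_(r-1), where q stands for P(Y_r = 1 | Y_(r-1)),
   and, below, its mean given Y_1, ..., Y_(s-1), where q stands for P(Y_r = 1 | Y_s = 1).
   The fixed effect is absorbed into the odds exp(z_n + alpha). *)
Definition m_a_before_r (t s : nat) (q : R) (y : path) : R :=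
  match yat y0 y t, yat y0 y s with
  | true, true => q * (1 + (odds s y)^-1) - 1
  | false, true => odds t y * (1 + (odds s y)^-1) * (1 - q)
  | true, false => -1
  | false, false => 0
  end.

Definition m_a_before_s (t : nat) (q : R) (y : path) : R :=
  if yat y0 y t then q - 1 else odds t y * (1 - q).

Lemma m_a_depends t s r : (t < s < r)%N ->
  depends_upto r (fun y => m_a t s r y0 y x beta gamma).
Proof. by move=> htsr y y' e; rewrite /m_a ?(yat_agree e) ?(zt_agree e) //; lia. Qed.

Lemma m_a_before_r_depends t s q : (t <= s)%N -> depends_upto s (m_a_before_r t s q).
Proof.
by move=> ts y y' e; rewrite /m_a_before_r ?(yat_agree e) ?(odds_agree e) //; lia.
Qed.

Lemma m_a_before_s_depends t q : depends_upto t (m_a_before_s t q).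
Proof. by move=> y y' e; rewrite /m_a_before_s (yat_agree e) ?(odds_agree e). Qed.

Lemma m_a_before_r_affine t s : affine_param (m_a_before_r t s).
Proof. by move=> p q1 q2 y; rewrite /m_a_before_r; case: yat; case: yat; ring. Qed.

Lemma integrate_out_m_a t s r y : (t < s < r)%N -> (r <= T)%N ->
  integrate_out r (fun y => m_a t s r y0 y x beta gamma) y =
  m_a_before_r t s (trans_prob r (yat y0 y r.-1)) y.
Proof.
move=> /andP[ts sr] rT.
have [tr tr' sr' r0] : [/\ (t < r)%N, (t <= r)%N, (s <= r)%N & (0 < r <= T)%N].
  by split; lia.
rewrite /integrate_out /m_a !yat_setp // !yat_setp_lt // !zt_setp //.
rewrite !expR_zt_sub trans_probE /m_a_before_r.
by case: (yat y0 y t); case: (yat y0 y s) => /=; field_odds.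
Qed.

Lemma integrate_out_m_a_before_r t s (psi : bool -> R) y : (t < s <= T)%N ->
  integrate_out s (fun y => m_a_before_r t s (psi (yat y0 y s)) y) y =
  m_a_before_s t (psi true) y.
Proof.
move=> /andP[ts sT]; have [ts' s0] : (t <= s)%N /\ (0 < s <= T)%N by split; lia.
rewrite /integrate_out /m_a_before_r !yat_setp // !yat_setp_lt // !odds_setp //.
rewrite trans_probE /m_a_before_s.
by case: (yat y0 y t) => /=; field_odds.
Qed.

Lemma integrate_out_m_a_before_s t q y : (0 < t <= T)%N ->
  integrate_out t (m_a_before_s t q) y = 0.
Proof.
move=> t0; rewrite /integrate_out /m_a_before_s !yat_setp // !odds_setp //.
by rewrite trans_probE; field_odds.
Qed.

(* As for m^(a), with the event Y_s = 0 in place of Y_s = 1. *)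
Definition m_b_before_r (t s : nat) (q : R) (y : path) : R :=
  match yat y0 y t, yat y0 y s with
  | false, false => odds s y * (1 - q) - q
  | false, true => -1
  | true, false => q * (1 + odds s y) / odds t y
  | true, true => 0
  end.

Definition m_b_before_s (t : nat) (q : R) (y : path) : R :=
  if yat y0 y t then q / odds t y else - q.

Lemma m_b_depends t s r : (t < s < r)%N ->
  depends_upto r (fun y => m_b t s r y0 y x beta gamma).
Proof. by move=> htsr y y' e; rewrite /m_b ?(yat_agree e) ?(zt_agree e) //; lia. Qed.

Lemma m_b_before_r_depends t s q : (t <= s)%N -> depends_upto s (m_b_before_r t s q).
Proof.
by move=> ts y y' e; rewrite /m_b_before_r ?(yat_agree e) ?(odds_agree e) //; lia.
Qed.

Lemma m_b_before_s_depends t q : depends_upto t (m_b_before_s t q).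
Proof. by move=> y y' e; rewrite /m_b_before_s (yat_agree e) ?(odds_agree e). Qed.

Lemma m_b_before_r_affine t s : affine_param (m_b_before_r t s).
Proof. by move=> p q1 q2 y; rewrite /m_b_before_r; case: yat; case: yat; ring. Qed.

Lemma integrate_out_m_b t s r y : (t < s < r)%N -> (r <= T)%N ->
  integrate_out r (fun y => m_b t s r y0 y x beta gamma) y =
  m_b_before_r t s (trans_prob r (yat y0 y r.-1)) y.
Proof.
move=> /andP[ts sr] rT.
have [tr tr' sr' r0] : [/\ (t < r)%N, (t <= r)%N, (s <= r)%N & (0 < r <= T)%N].
  by split; lia.
rewrite /integrate_out /m_b !yat_setp // !yat_setp_lt // !zt_setp //.
rewrite !expR_zt_sub trans_probE /m_b_before_r.
by case: (yat y0 y t); case: (yat y0 y s) => /=; field_odds.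
Qed.

Lemma integrate_out_m_b_before_r t s (psi : bool -> R) y : (t < s <= T)%N ->
  integrate_out s (fun y => m_b_before_r t s (psi (yat y0 y s)) y) y =
  m_b_before_s t (psi false) y.
Proof.
move=> /andP[ts sT]; have [ts' s0] : (t <= s)%N /\ (0 < s <= T)%N by split; lia.
rewrite /integrate_out /m_b_before_r !yat_setp // !yat_setp_lt // !odds_setp //.
rewrite trans_probE /m_b_before_s.
by case: (yat y0 y t) => /=; field_odds.
Qed.

Lemma integrate_out_m_b_before_s t q y : (0 < t <= T)%N ->
  integrate_out t (m_b_before_s t q) y = 0.
Proof.
move=> t0; rewrite /integrate_out /m_b_before_s !yat_setp // !odds_setp //.
by rewrite trans_probE; field_odds.
Qed.

Lemma cond_exp_m_a t s r (w : {ffun 'I_t.-1 -> bool} -> R) :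
  (0 < t)%N -> (t < s)%N -> (s < r)%N -> (r <= T)%N ->
  E (fun y => w (hist t y0 y) * m_a t s r y0 y x beta gamma) = 0.
Proof.
move=> t0 ts sr rT.
apply: (cond_exp_weighted_eq0 _ _ (m_a_before_r t s) (m_a_before_s t) true t0 ts sr rT).
- by move=> y y' e; rewrite (hist_agree e) //; lia.
- by apply: m_a_depends; rewrite ts.
- by move=> q; apply: m_a_before_r_depends; apply: ltnW.
- exact: m_a_before_r_affine.
- exact: m_a_before_s_depends.
- by move=> y; rewrite integrate_out_m_a ?ts.
- by move=> psi y; rewrite integrate_out_m_a_before_r // ts; lia.
- by move=> q y; rewrite integrate_out_m_a_before_s // t0; lia.
Qed.

Lemma cond_exp_m_b t s r (w : {ffun 'I_t.-1 -> bool} -> R) :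
  (0 < t)%N -> (t < s)%N -> (s < r)%N -> (r <= T)%N ->
  E (fun y => w (hist t y0 y) * m_b t s r y0 y x beta gamma) = 0.
Proof.
move=> t0 ts sr rT.
apply: (cond_exp_weighted_eq0 _ _ (m_b_before_r t s) (m_b_before_s t) false t0 ts sr rT).
- by move=> y y' e; rewrite (hist_agree e) //; lia.
- by apply: m_b_depends; rewrite ts.
- by move=> q; apply: m_b_before_r_depends; apply: ltnW.
- exact: m_b_before_r_affine.
- exact: m_b_before_s_depends.
- by move=> y; rewrite integrate_out_m_b ?ts.
- by move=> psi y; rewrite integrate_out_m_b_before_r // ts; lia.
- by move=> q y; rewrite integrate_out_m_b_before_s // t0; lia.
Qed.

End DynLogitMoments.

Theorem proposition1 (R : realType) (T K : nat) (hT : (3 <= T)%N)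
  (beta0 : 'cV[R]_K) (gamma0 : R) (t s r : nat)
  (ht : (1 <= t)%N) (hts : (t < s)%N) (hsr : (s < r)%N) (hr : (r <= T)%N)
  (y0 : bool) (x : 'M[R]_(K, T)) (alpha : R)
  (w : {ffun 'I_t.-1 -> bool} -> R) :
  cond_exp beta0 gamma0 y0 x alpha
    (fun y => w (hist t y0 y) * m_a t s r y0 y x beta0 gamma0) = 0 /\
  cond_exp beta0 gamma0 y0 x alpha
    (fun y => w (hist t y0 y) * m_b t s r y0 y x beta0 gamma0) = 0.
Proof. by split; [apply: cond_exp_m_a | apply: cond_exp_m_b]. Qed.
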